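(* Let $\Pi$ be a min-FGPP with $\alpha_2\ge\frac{\alpha_1}{2}>0$. Let $(G=(V,E),k,p)$ be an instance of $\Pi$, let $x=\max\{\frac{p}{\alpha_2},\min\{\frac{p}{\alpha_1},\frac{p}{\alpha_2}+(1-\frac{\alpha_1}{\alpha_2})k\}\}$, write $E=\{e_1,\dots,e_{|E|}\}$, and let $\mathcal{F}$ be an $(|E|,x)$-universal set. For each $f\in\mathcal{F}$ let $G_f$ be a copy of $G$ in which the copy of $e_i$ is colored red if $f(i)=0$ and blue if $f(i)=1$. Then $(G,k,p)$ is a yes-instance of $\Pi$ if and only if at least one of the instances $(G_f,k,p)$, $f\in\mathcal{F}$, is a yes-instance of EC-$\Pi$.
   Context: Graphs are finite, simple and undirected. For $X\subseteq V$, $E(X)$ is the set of edges with both endpoints in $X$, $E(X,V\setminus X)$ the set of edges with exactly one endpoint in $X$, and $\mathrm{val}(X)=\alpha_1|E(X)|+\alpha_2|E(X,V\setminus X)|$. The min-FGPP $\Pi$: given $G=(V,E)$, $k\in\mathbb{N}$, $p\in\mathbb{R}$, decide whether some $X\subseteq V$ with $|X|=k$ has $\mathrm{val}(X)\le p$. For a graph whose edges are each colored red or blue and $X\subseteq V$, let $\mathrm{C}(X)$ be the family of node-sets of maximal connected components of the graph $(X,E_r)$, where $E_r$ is the set of red edges with both endpoints in $X$, and let $\mathrm{val}^*(X)=\sum_{C\in\mathrm{C}(X)}\mathrm{val}(C)$ (with $\mathrm{val}$ computed in the whole graph, ignoring colors). EC-$\Pi$: given such an edge-colored graph, $k\in\mathbb{N}$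 and $p\in\mathbb{R}$, decide whether there is $X\subseteq V$ with $|X|=k$ such that all edges of $E(X,V\setminus X)$ are blue and $\mathrm{val}^*(X)\le p$. For real $t\ge0$, a set $\mathcal{F}$ of functions $\{1,\dots,n\}\to\{0,1\}$ is an $(n,t)$-universal set if for every $I\subseteq\{1,\dots,n\}$ with $|I|\le t$ and every $f':I\to\{0,1\}$ there is $f\in\mathcal{F}$ with $f(i)=f'(i)$ for all $i\in I$. *)

From HB Require Import structures.
From mathcomp Require Import all_boot all_order all_algebra.
Set Implicit Arguments. Unset Strict Implicit. Unset Printing Implicit Defensive.
Import Order.TTheory GRing.Theory Num.Theory.
Local Open Scope ring_scope.

Definition simple_graph (T : finType) (e : rel T) : Prop :=
  symmetric e /\ irreflexive e.

Definition edgeset (T : finType) (e : rel T) : {set {set T}} :=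
  [set A : {set T} | [exists x, exists y, e x y && (A == [set x; y])]].

Definition nE (T : finType) (e : rel T) (X : {set T}) : nat :=
  #|[set A in edgeset e | A \subset X]|.

Definition nCut (T : finType) (e : rel T) (X : {set T}) : nat :=
  #|[set A in edgeset e | #|A :&: X| == 1%N]|.

Definition cutset (T : finType) (e : rel T) (X : {set T}) : {set {set T}} :=
  [set A in edgeset e | #|A :&: X| == 1%N].

Definition fval (R : realFieldType) (a1 a2 : R) (T : finType) (e : rel T)
  (X : {set T}) : R :=
  a1 * (nE e X)%:R + a2 * (nCut e X)%:R.

Definition Pi_yes (R : realFieldType) (a1 a2 : R) (T : finType) (e : rel T)
  (k : nat) (p : R) : Prop :=
  exists X : {set T}, #|X| = k /\ fval a1 a2 e X <= p.

(* Edge colouring: col A = true means edge A is blue, false means red. *)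
Definition red_rel (T : finType) (e : rel T) (col : {set T} -> bool)
  (X : {set T}) : rel T :=
  [rel u v | [&& u \in X, v \in X, e u v & ~~ col [set u; v]]].

Definition red_comps (T : finType) (e : rel T) (col : {set T} -> bool)
  (X : {set T}) : {set {set T}} :=
  [set [set v in X | connect (red_rel e col X) u v] | u in X].

Definition fval_star (R : realFieldType) (a1 a2 : R) (T : finType) (e : rel T)
  (col : {set T} -> bool) (X : {set T}) : R :=
  \sum_(C in red_comps e col X) fval a1 a2 e C.

Definition ECPi_yes (R : realFieldType) (a1 a2 : R) (T : finType) (e : rel T)
  (col : {set T} -> bool) (k : nat) (p : R) : Prop :=
  exists X : {set T}, [/\ #|X| = k,
    (forall A, A \in cutset e X -> col A = true) &
    fval_star a1 a2 e col X <= p].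

Definition universal_set (R : realFieldType) (n : nat) (t : R)
  (F : {set {ffun 'I_n -> bool}}) : Prop :=
  forall (I : {set 'I_n}), (#|I|%:R <= t) ->
  forall f' : 'I_n -> bool, exists2 f, f \in F & forall i, i \in I -> f i = f' i.

Definition colour_of (T : finType) (m : nat) (ed : 'I_m -> {set T})
  (f : {ffun 'I_m -> bool}) : {set T} -> bool :=
  fun A => [exists i, (ed i == A) && f i].

From HB Require Import structures.
From mathcomp Require Import all_boot all_order all_algebra ring lra zify.
Import Order.TTheory GRing.Theory Num.Theory.
Set Implicit Arguments. Unset Strict Implicit. Unset Printing Implicit Defensive.

(* If X solves the instance, a spanning forest S of G[X] has at most
   min(|E(X)|, |X|) edges, so S together with the cut E(X, V \ X) has at most
   x edges and some f in F colours S red and the cut blue.  Every edge inside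
   X then joins two vertices of one red component, and val*(X) = val(X).
   Conversely val(X) <= val*(X) for every colouring: splitting X into red
   components turns an inner edge of cost a1 either into an inner edge of a
   component or into two cut edges of total cost 2 a2 >= a1. *)

Lemma set2_inj (T : finType) (u v x y : T) :
  [set u; v] = [set x; y] -> (u = x /\ v = y) \/ (u = y /\ v = x).
Proof.
move=> huv.
have /set2P[] : u \in [set x; y] by rewrite -huv set21.
all: have /set2P[] : v \in [set x; y] by rewrite -huv set22.
all: move=> vE uE; subst u v; try by [left | right].
- have : y \in [set x; x] by rewrite huv set22.
  by rewrite !inE orbb => /eqP ->; left.
- have : x \in [set y; y] by rewrite huv set21.
  by rewrite !inE orbb => /eqP ->; left.
Qed.

Lemma card_set2I (T : finType) (x y : T) (C : {set T}) : x != y ->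
  #|[set x; y] :&: C| = ((x \in C) + (y \in C))%N.
Proof.
move=> nxy; rewrite -sum1_card.
rewrite (eq_bigl (fun z => (z \in [set x; y]) && (z \in C))); last first.
  by move=> z; rewrite !inE.
rewrite big_mkcondr big_setU1 ?inE //= big_set1.
by case: (x \in C); case: (y \in C).
Qed.

Section Classes.
Variables (T : finType) (r : rel T) (X : {set T}).
Hypothesis r_sym : symmetric r.

Definition rclass (u : T) : {set T} := [set v in X | connect r u v].
Definition rclasses : {set {set T}} := [set rclass u | u in X].

Lemma rclass_eq u w : connect r u w -> rclass u = rclass w.
Proof.
move=> h; apply/setP => v; rewrite !inE.
by rewrite (same_connect (sym_connect_sym r_sym) h).
Qed.

Lemma mem_rclass u : u \in X -> u \in rclass u.
Proof. by move=> uX; rewrite inE uX connect0. Qed.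

Local Open Scope ring_scope.

Lemma sum_rclasses_mem (R : pzRingType) x (g : {set T} -> R) :
  \sum_(C in rclasses) (x \in C)%:R * g C = (x \in X)%:R * g (rclass x).
Proof.
rewrite (eq_bigr (fun C : {set T} => if x \in C then g C else 0)); last first.
  by move=> C _; case: (x \in C); rewrite ?mul1r ?mul0r.
rewrite -big_mkcondr.
case xX: (x \in X); last first.
  rewrite big1 ?mul0r // => C /andP[/imsetP[u _ ->]].
  by rewrite inE xX.
rewrite (bigD1 (rclass x)) /=; last by rewrite imset_f ?mem_rclass.
rewrite big1 ?addr0 ?mul1r // => C /andP[/andP[/imsetP[u _ ->]]].
by rewrite inE => /andP[_ /rclass_eq ->]; rewrite eqxx.
Qed.

End Classes.

Section SpanningForest.
Variables (T : finType) (X : {set T}).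

Definition pair_rel (S : {set {set T}}) : rel T := fun u v => [set u; v] \in S.

Definition n_pair_classes (S : {set {set T}}) : nat := #|rclasses (pair_rel S) X|.

Lemma pair_rel_sym (S : {set {set T}}) : symmetric (pair_rel S).
Proof. by move=> u v; rewrite /pair_rel setUC. Qed.

Lemma connect_pair_relS (S S' : {set {set T}}) u v :
  S \subset S' -> connect (pair_rel S) u v -> connect (pair_rel S') u v.
Proof.
move=> sSS'; apply: connect_sub => a b Sab; apply: connect1.
exact: (subsetP sSS').
Qed.

Lemma n_pair_classes_add (S : {set {set T}}) x y : x \in X -> y \in X ->
  ~~ connect (pair_rel S) x y -> n_pair_classes ([set x; y] |: S) < n_pair_classes S.
Proof.
move=> xX yX nSxy; set S' := [set x; y] |: S.
have sSS' : S \subset S' by apply: subsetUr.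
pose g (C : {set T}) := if [pick v in C] is Some v then rclass (pair_rel S') X v else set0.
have gE u : u \in X -> g (rclass (pair_rel S) X u) = rclass (pair_rel S') X u.
  move=> uX; rewrite /g; case: pickP => [v | /(_ u)]; last by rewrite mem_rclass.
  rewrite inE => /andP[_ /(connect_pair_relS sSS') Suv].
  by rewrite (rclass_eq X (@pair_rel_sym S') Suv).
set K := rclasses (pair_rel S) X.
have -> : n_pair_classes S' = #|g @: K|.
  rewrite /n_pair_classes /rclasses -imset_comp.
  by rewrite (eq_in_imset (g := g \o rclass (pair_rel S) X)) // => u uX /=; rewrite gE.
have xK : rclass (pair_rel S) X x \in K by apply: imset_f.
have yK : rclass (pair_rel S) X y \in K by apply: imset_f.
have gxy : g (rclass (pair_rel S) X x) = g (rclass (pair_rel S) X y).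
  by rewrite !gE //; apply/(rclass_eq X (@pair_rel_sym S'))/connect1/setU11.
rewrite ltn_neqAle leq_imset_card andbT; apply/imset_injP => /(_ _ _ xK yK gxy) Cxy.
by move: (mem_rclass (pair_rel S) yX); rewrite -Cxy inE (negbTE nSxy) andbF.
Qed.

Lemma exists_pair_forest (s : seq {set T}) :
  (forall A, A \in s -> exists x y, [/\ x \in X, y \in X & A = [set x; y]]) ->
  exists S : {set {set T}}, [/\ {subset S <= s}, #|S| + n_pair_classes S <= #|X| &
    forall x y, [set x; y] \in s -> connect (pair_rel S) x y].
Proof.
elim: s => [_ | A s IH hs].
  exists set0; split => //; first by move=> A; rewrite inE.
  by rewrite cards0 add0n leq_imset_card.
have [S [Ss cardS connS]] : exists S : {set {set T}}, [/\ {subset S <= s},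
    #|S| + n_pair_classes S <= #|X| & forall x y, [set x; y] \in s -> connect (pair_rel S) x y].
  by apply: IH => B Bs; apply: hs; rewrite inE Bs orbT.
have [x [y [xX yX ->]]] := hs A (mem_head _ _).
have S_sub B : B \in S -> B \in [set x; y] :: s by move/Ss; rewrite inE => ->; rewrite orbT.
case Sxy: (connect (pair_rel S) x y).
  exists S; split => // u v; rewrite inE => /orP[/eqP /set2_inj[] [-> ->] // | /connS //].
  by rewrite (sym_connect_sym (@pair_rel_sym S)).
have sSS' : S \subset [set x; y] |: S by apply: subsetUr.
exists ([set x; y] |: S); split.
- by move=> B; rewrite in_setU1 => /orP[/eqP -> | /S_sub //]; apply: mem_head.
- have := n_pair_classes_add xX yX (negbT Sxy).
  by rewrite cardsU1 => lt; apply: leq_trans cardS; case: (_ \notin _); lia.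
- move=> u v; rewrite inE => /orP[/eqP uvE | /connS /(connect_pair_relS sSS') //].
  by apply: connect1; rewrite /pair_rel uvE setU11.
Qed.

End SpanningForest.

Section EdgeCost.
Local Open Scope ring_scope.
Variables (R : realFieldType) (a1 a2 : R) (T : finType) (e : rel T).
Hypothesis hG : simple_graph e.

Lemma edgeset_pair A :
  A \in edgeset e -> exists x y, [/\ e x y, x != y & A = [set x; y]].
Proof.
rewrite inE => /existsP[x /existsP[y /andP[exy /eqP ->]]].
exists x, y; split => //; apply/eqP => xy; subst y.
by case: hG => _ /(_ x); rewrite exy.
Qed.

Lemma edgeset_rel u v : [set u; v] \in edgeset e -> e u v.
Proof.
move=> /edgeset_pair[x [y [exy _ /set2_inj[] [-> ->] //]]].
by case: hG => esym _; rewrite esym.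
Qed.

Definition edge_cost (C A : {set T}) : R :=
  a1 * (A \subset C)%:R + a2 * (#|A :&: C| == 1)%N%:R.

Lemma fval_sum_edges C : fval a1 a2 e C = \sum_(A in edgeset e) edge_cost C A.
Proof.
have card_sep (P : pred {set T}) :
    #|[set A in edgeset e | P A]|%:R = \sum_(A in edgeset e) (P A)%:R :> R.
  rewrite -sum1_card natr_sum (eq_bigl (fun A => (A \in edgeset e) && P A)).
    by rewrite big_mkcondr; apply: eq_bigr => A _; case: (P A).
  by move=> A; rewrite inE.
rewrite /fval /nE /nCut !card_sep !mulr_sumr -big_split.
by apply: eq_bigr.
Qed.

(* The cost of an edge is affine in the indicators of its endpoints and
   their product, which makes it additive over a partition of C. *)
Lemma edge_cost_pair C x y : x != y ->
  edge_cost C [set x; y] = (a1 - 2 * a2) * ((x \in C)%:R * (y \in C)%:R)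
    + a2 * (x \in C)%:R + a2 * (y \in C)%:R.
Proof.
move=> nxy; rewrite /edge_cost subUset !sub1set card_set2I //.
by case: (x \in C); case: (y \in C) => /=; lra.
Qed.

Section RedComponents.
Variables (col : {set T} -> bool) (X : {set T}).
Let red := red_rel e col X.

Lemma red_rel_sym : symmetric red.
Proof.
case: hG => esym _ u v; rewrite /red /red_rel /= esym setUC.
by case: (u \in X); case: (v \in X).
Qed.

Lemma red_compsE : red_comps e col X = rclasses red X.
Proof. by []. Qed.

Lemma sum_red_comps_edge_cost x y : x != y ->
  \sum_(C in red_comps e col X) edge_cost C [set x; y] =
  (a1 - 2 * a2) * ((x \in X)%:R * (y \in rclass red X x)%:R)
    + a2 * (x \in X)%:R + a2 * (y \in X)%:R.
Proof.
move=> nxy; rewrite (eq_bigr (fun C : {set T} =>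
  (x \in C)%:R * ((a1 - 2 * a2) * (y \in C)%:R + a2) + (y \in C)%:R * a2)).
  by rewrite big_split /= red_compsE !(sum_rclasses_mem _ red_rel_sym); ring.
by move=> C _; rewrite edge_cost_pair //; ring.
Qed.

Lemma fval_star_edges :
  fval_star a1 a2 e col X =
  \sum_(A in edgeset e) \sum_(C in red_comps e col X) edge_cost C A.
Proof.
by rewrite /fval_star; under eq_bigr do rewrite fval_sum_edges; rewrite exchange_big.
Qed.

Lemma fval_le_fval_star :
  a1 <= 2 * a2 -> fval a1 a2 e X <= fval_star a1 a2 e col X.
Proof.
move=> a12; rewrite fval_star_edges fval_sum_edges.
apply: ler_sum => _ /edgeset_pair[x [y [_ nxy ->]]].
rewrite sum_red_comps_edge_cost // edge_cost_pair // inE.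
by case: (x \in X); case: (y \in X); case: (connect red x y) => /=; nra.
Qed.

Lemma fval_star_connected :
  (forall x y, x \in X -> y \in X -> e x y -> connect red x y) ->
  fval_star a1 a2 e col X = fval a1 a2 e X.
Proof.
move=> conn; rewrite fval_star_edges fval_sum_edges.
apply: eq_bigr => _ /edgeset_pair[x [y [exy nxy ->]]].
rewrite sum_red_comps_edge_cost // edge_cost_pair // inE.
case xX: (x \in X); case yX: (y \in X) => /=; try by ring.
by rewrite (conn x y) //=; ring.
Qed.

End RedComponents.

Definition inner_edges (X : {set T}) : {set {set T}} :=
  [set A in edgeset e | A \subset X].

Lemma inner_edges_notin_cutset X A : A \in inner_edges X -> A \notin cutset e X.
Proof.
rewrite inE => /andP[/edgeset_pair[x [y [_ nxy ->]]] sX].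
by rewrite inE (setIidPl sX) cards2 nxy andbF.
Qed.

Lemma exists_spanning_forest X :
  exists S : {set {set T}}, [/\ S \subset inner_edges X, #|S| <= #|X|
    & forall x y, x \in X -> y \in X -> e x y -> connect (pair_rel S) x y]%N.
Proof.
have [|S [SE cardS connS]] := @exists_pair_forest T X (enum (inner_edges X)).
  move=> A; rewrite mem_enum inE => /andP[/edgeset_pair[x [y [_ _ ->]]]].
  by rewrite subUset !sub1set => /andP[xX yX]; exists x, y.
exists S; split.
- by apply/subsetP => A /SE; rewrite mem_enum.
- exact: leq_trans (leq_addr _ _) cardS.
- move=> x y xX yX exy; apply: connS; rewrite mem_enum inE subUset !sub1set xX yX.
  rewrite inE; apply/andP; split => //.
  by apply/existsP; exists x; apply/existsP; exists y; rewrite exy eqxx.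
Qed.

Lemma fval_star_red_forest col X (S : {set {set T}}) :
  S \subset inner_edges X ->
  (forall x y, x \in X -> y \in X -> e x y -> connect (pair_rel S) x y) ->
  (forall A, A \in S -> col A = false) ->
  fval_star a1 a2 e col X = fval a1 a2 e X.
Proof.
move=> SE connS Sred; apply: fval_star_connected => x y xX yX exy.
apply: connect_sub (connS x y xX yX exy) => u v Suv; apply: connect1.
move: (subsetP SE _ Suv); rewrite inE subUset !sub1set => /andP[uvE /andP[uX vX]].
by rewrite /red_rel /= uX vX (edgeset_rel uvE) Sred.
Qed.

End EdgeCost.

Local Open Scope ring_scope.

(* The colours to prescribe are those of [s] forest edges and [c] cut edges,
   where [n] and [c] are |E(X)| and |E(X, V \ X)| for a solution X. *)
Lemma le_universality_threshold (R : realFieldType) (a1 a2 s n c k p : R) :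
  0 < a1 -> a1 <= 2 * a2 -> 0 <= s -> s <= n -> s <= k -> 0 <= c ->
  a1 * n + a2 * c <= p ->
  s + c <= Num.max (p / a2) (Num.min (p / a1) (p / a2 + (1 - a1 / a2) * k)).
Proof.
move=> a1_gt0 a12 s_ge0 sn sk c_ge0 val_le.
have a2_gt0 : 0 < a2 by lra.
case: (lerP a2 a1) => a21.
  by rewrite le_max ler_pdivlMr //; apply/orP; left; nra.
rewrite le_max le_min; apply/orP; right; apply/andP; split.
  by rewrite ler_pdivlMr //; nra.
have -> : p / a2 + (1 - a1 / a2) * k = (p + (a2 - a1) * k) / a2.
  by field; apply/eqP; lra.
by rewrite ler_pdivlMr //; nra.
Qed.

Section EdgeEnumeration.
Variables (T : finType) (e : rel T) (m : nat) (ed : 'I_m -> {set T}).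
Hypothesis ed_inj : injective ed.

Lemma colour_of_edge f i : colour_of ed f (ed i) = f i.
Proof.
apply/existsP/idP => [[j /andP[/eqP /ed_inj -> //]] | fi].
by exists i; rewrite eqxx.
Qed.

Hypothesis ed_onto : forall A, A \in edgeset e -> exists i, ed i = A.

Lemma colour_of_preim (f : {ffun 'I_m -> bool}) (B : {set {set T}}) (g : {set T} -> bool) A :
  (forall i, i \in ed @^-1: B -> f i = g (ed i)) ->
  A \in edgeset e -> A \in B -> colour_of ed f A = g A.
Proof.
move=> fg /ed_onto[i <-] Bi; rewrite colour_of_edge fg //.
by rewrite inE.
Qed.

Lemma card_preim_edges (B : {set {set T}}) : (#|ed @^-1: B| <= #|B|)%N.
Proof.
rewrite -(card_imset _ ed_inj); apply/subset_leq_card/subsetP => A /imsetP[i].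
by rewrite inE => Bi ->.
Qed.

End EdgeEnumeration.

Theorem lemma13 (R : realFieldType) (a1 a2 : R)
  (ha1 : 0 < a1 / 2) (ha2 : a1 / 2 <= a2)
  (T : finType) (e : rel T) (hG : simple_graph e)
  (k : nat) (p : R)
  (m : nat) (ed : 'I_m -> {set T}) (ed_inj : injective ed)
  (ed_onto : forall A, A \in edgeset e <-> exists i, ed i = A)
  (F : {set {ffun 'I_m -> bool}})
  (hF : universal_set
          (Num.max (p / a2)
             (Num.min (p / a1) (p / a2 + (1 - a1 / a2) * k%:R))) F) :
  Pi_yes a1 a2 e k p <->
  exists2 f, f \in F & ECPi_yes a1 a2 e (colour_of ed f) k p.
Proof.
have a1_gt0 : 0 < a1 by lra.
have a12 : a1 <= 2 * a2 by lra.
split=> [[X [cardX valX]] | [f _ [X [cardX _ valX]]]]; last first.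
  by exists X; split=> //; apply: le_trans valX; apply: fval_le_fval_star.
have [S [SE cardS connS]] := exists_spanning_forest hG X.
set I := ed @^-1: (S :|: cutset e X).
have cardI : #|I|%:R <= Num.max (p / a2)
    (Num.min (p / a1) (p / a2 + (1 - a1 / a2) * k%:R)).
  apply: le_trans (_ : (#|S| + nCut e X)%:R <= _).
    by rewrite ler_nat (leq_trans (card_preim_edges ed_inj _) (leq_card_setU _ _).1).
  rewrite natrD; apply: (le_universality_threshold (n := (nE e X)%:R)) => //.
  by rewrite ler_nat; apply: subset_leq_card.
  by rewrite ler_nat -cardX.
have [f fF agree] := hF I cardI (fun i => ed i \notin S).
have colourE := colour_of_preim ed_inj (fun A => (ed_onto A).1)
  (g := fun A => A \notin S) agree.
exists f => //; exists X; split => // [A AC | ].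
  have AE : A \in edgeset e by move: AC; rewrite inE => /andP[].
  rewrite colourE ?in_setU ?AC ?orbT //.
  by apply/negP => /(subsetP SE) /(inner_edges_notin_cutset hG); rewrite AC.
rewrite (fval_star_red_forest a1 a2 hG SE connS) // => A AS.
have := subsetP SE _ AS; rewrite inE => /andP[AE _].
by rewrite colourE ?in_setU ?AS.
Qed.
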